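(* Let $N\geq 2$ be an integer, let $I_0>0$, and let $0<\mu_{min}\leq\mu_{max}$ and $\varepsilon_{max}\geq 0$ be given constants. For $K>0$, $\mu_1\in\mathbb{R}$ and $\varepsilon\geq 0$ define $$G_N(K,\mu_1,\varepsilon)=\frac{I_0}{K}\Big[(1+K\mu_1)^N+\big(1-K\mu_1(1+\varepsilon)\big)^N-2\Big].$$ Call a pair $(\mu_1,\varepsilon)$ admissible if $\mu_{min}\leq|\mu_1|\leq\mu_{max}$ and $0\leq\varepsilon\leq\varepsilon_{max}$. Fix $K>0$. (i) If $N$ is odd, then $G_N(K,\mu_1,\varepsilon)>0$ for all admissible pairs $(\mu_1,\varepsilon)$ if and only if $$G_N(K,\mu_{min},\varepsilon_{max})>0\quad\text{and}\quad G_N(K,\mu_{max},\varepsilon_{max})>0.$$ (ii) If $N$ is even, then $G_N(K,\mu_1,\varepsilon)>0$ for all admissible pairs $(\mu_1,\varepsilon)$ if and only if either $$K>\frac{2^{1/N}-1}{\mu_{min}},$$ or both $$K\leq\frac{1}{\mu_{min}(1+\varepsilon_{max})}\quad\text{and}\quad G_N(K,\mu_{min},\varepsilon_{max})>0.$$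
   Context: Financial interpretation (not needed for the mathematical statement): two stocks have independent per-period returns with constant means $\mu_1$ and $\mu_2=\beta\mu_1$, where $\beta=(1+\varepsilon)\beta_0$ with $\beta_0\neq 0$ known and $\varepsilon\in[0,\varepsilon_{max}]$ unknown (''directionally correlated returns''), and $\mu_{min}\leq|\mu_1|\leq\mu_{max}$ (''bounded non-zero momentum''). A two-stock controller invests $I_1(k)=I_0+Kg_1(k)$ in the first stock and $I_2(k)=-I_0/\beta_0-(K/\beta_0)g_2(k)$ in the second stock, where $g_i$ are the cumulative gain-loss functions with $g_i(0)=0$, under idealized frictionless market conditions. Then the expected total gain after $N$ periods is $\mathbb{E}[g(N)]=G_N(K,\mu_1,\varepsilon)$, and the theorem characterizes the feedback parameters $K>0$ for which this expectation is positive for all admissible parameters. Here $2^{1/N}$ denotes the positive real $N$-th root of $2$. *)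

From Stdlib Require Import Reals Lra Lia Arith.
Open Scope R_scope.

Definition G (N : nat) (I0 K mu1 eps : R) : R :=
  I0 / K * ((1 + K * mu1) ^ N + (1 - K * mu1 * (1 + eps)) ^ N - 2).

Definition admissible (mumin mumax epsmax mu1 eps : R) : Prop :=
  mumin <= Rabs mu1 <= mumax /\ 0 <= eps <= epsmax.

Definition root2 (N : nat) : R := Rpower 2 (/ INR N).

From Stdlib Require Import Reals Arith Lra Lia.
From Coquelicot Require Import Coquelicot.
Open Scope R_scope.

(* With x = K mu1 and c = 1 + eps, the sign of G is the sign of
   F(x, c) = (1 + x)^N + (1 - x c)^N - 2.  For x < 0 it is positive, since
   (1 + x)^N + (1 - x)^N > 2.  For x > 0, F(0, c) = 0 and F(., c) is convex on
   [0, 1/c], so positivity propagates to larger x up to the kink x = 1/c.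
   For odd N, F decreases in c, so eps = eps_max is the worst case; beyond the
   kink the derivative of F changes sign at most once, from - to +, so F cannot
   dip below zero between two points where it is positive.  For even N the
   second term is nonnegative, so F > 0 as soon as (1 + x)^N > 2, i.e.
   x > 2^(1/N) - 1.  Below that threshold c = 1/x would give
   F(x, c) = (1 + x)^N - 2 <= 0, which forces K mu_min (1 + eps_max) <= 1, and
   then positivity at the corner (mu_min, eps_max) propagates to every
   admissible pair. *)

Definition F (n : nat) (x c : R) : R := (1 + x) ^ n + (1 - x * c) ^ n - 2.

Definition F_pos_on (n : nat) (xmin xmax cmax : R) : Prop :=
  forall x c, xmin <= x <= xmax -> 1 <= c <= cmax -> 0 < F n x c.

Lemma G_pos_iff N I0 K mu1 eps : 0 < I0 -> 0 < K ->
  0 < G N I0 K mu1 eps <-> 0 < F N (K * mu1) (1 + eps).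
Proof.
  intros HI HK.
  assert (HIK : 0 < I0 / K) by (apply Rdiv_lt_0_compat; assumption).
  change (0 < I0 / K * F N (K * mu1) (1 + eps) <-> 0 < F N (K * mu1) (1 + eps)).
  split; intro H.
  - apply (Rmult_lt_reg_l (I0 / K)); [exact HIK|now rewrite Rmult_0_r].
  - now apply Rmult_lt_0_compat.
Qed.

Lemma pow_lt_pow_l a b n : 0 <= a < b -> n <> 0%nat -> a ^ n < b ^ n.
Proof.
  intros Hab Hn. destruct n as [|m]; [contradiction|]. simpl.
  assert (a ^ m <= b ^ m) by (apply pow_incr; lra).
  assert (0 < b ^ m) by (apply pow_lt; lra).
  nra.
Qed.

Lemma pow_even_nonneg y n : Nat.Even n -> 0 <= y ^ n.
Proof. intros [k ->]. rewrite pow_mult. apply pow_le, pow2_ge_0. Qed.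

Lemma pow_opp_odd w n : Nat.Odd n -> (- w) ^ n = - w ^ n.
Proof.
  intros [k ->]. replace (- w) with (-1 * w) by ring.
  rewrite Rpow_mult_distr, Nat.add_1_r, pow_1_odd. ring.
Qed.

Lemma pow_odd_le u v n : Nat.Odd n -> u <= v -> u ^ n <= v ^ n.
Proof.
  intros Hn Huv. destruct (Rle_or_lt 0 u) as [Hu|Hu].
  - apply pow_incr; lra.
  - assert (Eu : (- u) ^ n = - u ^ n) by now apply pow_opp_odd.
    assert (0 <= (- u) ^ n) by (apply pow_le; lra).
    destruct (Rle_or_lt 0 v) as [Hv|Hv].
    + assert (0 <= v ^ n) by now apply pow_le. lra.
    + assert (Ev : (- v) ^ n = - v ^ n) by now apply pow_opp_odd.
      assert ((- v) ^ n <= (- u) ^ n) by (apply pow_incr; lra). lra.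
Qed.

Lemma pow_one_sub_add_gt2 y n : 0 < y -> (2 <= n)%nat ->
  2 < (1 - y) ^ n + (1 + y) ^ n.
Proof.
  intros Hy Hn. induction Hn as [|n Hn IH].
  - simpl. nra.
  - assert ((1 - y) ^ n <= (1 + y) ^ n) by (apply pow_maj_Rabs, Rabs_le; lra).
    simpl. nra.
Qed.

Lemma pow_convex_comb_1 a t n : 0 <= a -> 0 <= t <= 1 ->
  (t * a + (1 - t)) ^ n <= t * a ^ n + (1 - t).
Proof.
  intros Ha Ht. induction n as [|n IH]; [simpl; lra|].
  assert (Hs : 0 <= (a ^ n - 1) * (a - 1)).
  { destruct (Rle_or_lt 1 a) as [H1|H1].
    - pose proof (pow_R1_Rle a n H1). nra.
    - assert (a ^ n <= 1 ^ n) by (apply pow_incr; lra). rewrite pow1 in *. nra. }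
  assert (0 <= t * a + (1 - t)) by nra.
  assert (0 <= t * (1 - t) * ((a ^ n - 1) * (a - 1))) by (apply Rmult_le_pos; nra).
  simpl.
  apply Rle_trans with ((t * a + (1 - t)) * (t * a ^ n + (1 - t))).
  - now apply Rmult_le_compat_l.
  - nra.
Qed.

Lemma F_pos_of_neg n x c : (2 <= n)%nat -> x < 0 -> 1 <= c -> 0 < F n x c.
Proof.
  intros Hn Hx Hc. unfold F.
  assert ((1 - x) ^ n <= (1 - x * c) ^ n) by (apply pow_incr; nra).
  pose proof (pow_one_sub_add_gt2 (- x) n ltac:(lra) Hn) as H2.
  replace (1 - - x) with (1 + x) in H2 by ring.
  replace (1 + - x) with (1 - x) in H2 by ring.
  lra.
Qed.

(* F(0, c) = 0 and F(., c) is convex on [0, 1/c], so F(x, c) / x is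
   nondecreasing there. *)
Lemma F_pos_mono n x1 x2 c : 0 < x1 <= x2 -> 0 <= c -> x2 * c <= 1 ->
  0 < F n x1 c -> 0 < F n x2 c.
Proof.
  intros [Hx1 H12] Hc Hx2c H. unfold F in *.
  set (t := x1 / x2).
  assert (Ht : 0 < t <= 1).
  { unfold t. split; [apply Rdiv_lt_0_compat; lra|].
    apply Rle_div_l; lra. }
  assert (E1 : 1 + x1 = t * (1 + x2) + (1 - t)) by (unfold t; field; lra).
  assert (E2 : 1 - x1 * c = t * (1 - x2 * c) + (1 - t)) by (unfold t; field; lra).
  pose proof (pow_convex_comb_1 (1 + x2) t n ltac:(lra) ltac:(lra)).
  pose proof (pow_convex_comb_1 (1 - x2 * c) t n ltac:(lra) ltac:(lra)).
  rewrite E1, E2 in H.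
  nra.
Qed.

Definition dF (n : nat) (x c : R) : R :=
  INR n * ((1 + x) ^ pred n - c * (1 - x * c) ^ pred n).

Lemma F_derivative n x c : derivable_pt_lim (fun y => F n y c) x (dF n x c).
Proof.
  apply is_derive_Reals. unfold F, dF. auto_derive; [easy|unfold Rminus; ring].
Qed.

(* For odd n, dF n x c < 0 iff ((1 + x) / (x c - 1))^(n-1) < c, and the ratio
   decreases in x once x c > 1. *)
Lemma dF_neg_propagates n x1 x2 c : Nat.Odd n -> 0 < c -> 1 <= x1 * c ->
  x1 <= x2 -> dF n x1 c < 0 -> dF n x2 c < 0.
Proof.
  intros [k ->] Hc Hx1 H12. unfold dF.
  assert (0 < x1) by nra.
  replace (pred (2 * k + 1)) with (2 * k)%nat by lia.
  assert (Hsq : forall y, (1 - y * c) ^ (2 * k) = (y * c - 1) ^ (2 * k))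
    by (intro y; rewrite !pow_mult; f_equal; ring).
  rewrite !Hsq.
  set (m := (2 * k)%nat).
  assert (Hn : 0 < INR (m + 1)) by (apply lt_0_INR; lia).
  set (p1 := 1 + x1); set (p2 := 1 + x2); set (q1 := x1 * c - 1); set (q2 := x2 * c - 1).
  intro H1.
  assert (Hp1 : p1 ^ m < c * q1 ^ m) by nra.
  assert (0 < p1 ^ m) by (apply pow_lt; unfold p1; nra).
  assert (Hq1 : 0 < q1 ^ m) by nra.
  assert (q1 ^ m <= q2 ^ m) by (apply pow_incr; unfold q1, q2; nra).
  assert (Hcross : (p2 * q1) ^ m <= (p1 * q2) ^ m)
    by (apply pow_incr; unfold p1, p2, q1, q2; split; nra).
  rewrite !Rpow_mult_distr in Hcross.
  assert (p2 ^ m < c * q2 ^ m).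
  { apply (Rmult_lt_reg_r (q1 ^ m)); [exact Hq1|nra]. }
  nra.
Qed.

Lemma F_pos_between_above_kink n a x b c : Nat.Odd n -> 0 < c -> 1 <= a * c ->
  a <= x <= b -> 0 < F n a c -> 0 < F n b c -> 0 < F n x c.
Proof.
  intros Hn Hc Ha [Hax Hxb] Hfa Hfb.
  destruct (Rlt_or_le 0 (F n x c)) as [|Hfx]; [assumption|exfalso].
  destruct Hax as [Hax| <-]; [|lra].
  destruct Hxb as [Hxb| ->]; [|lra].
  destruct (MVT_cor2 (fun y => F n y c) (fun y => dF n y c) a x Hax
              (fun y _ => F_derivative n y c)) as [y1 [E1 Hy1]].
  destruct (MVT_cor2 (fun y => F n y c) (fun y => dF n y c) x b Hxb
              (fun y _ => F_derivative n y c)) as [y2 [E2 Hy2]].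
  cbv beta in E1, E2.
  assert (D1 : dF n y1 c < 0) by nra.
  assert (D2 : 0 < dF n y2 c) by nra.
  pose proof (dF_neg_propagates n y1 y2 c Hn Hc ltac:(nra) ltac:(lra) D1).
  lra.
Qed.

Lemma F_pos_between_odd n xmin x xmax c : Nat.Odd n -> 1 <= c ->
  0 < xmin <= x -> x <= xmax -> 0 < F n xmin c -> 0 < F n xmax c -> 0 < F n x c.
Proof.
  intros Hn Hc [Hmin Hx] HxM Hfmin Hfmax.
  set (k := 1 / c).
  assert (Hk : k * c = 1) by (unfold k; field; lra).
  destruct (Rle_or_lt (x * c) 1) as [Hxc|Hxc].
  - apply (F_pos_mono n xmin x c); lra.
  - destruct (Rle_or_lt 1 (xmin * c)) as [Hmc|Hmc].
    + apply (F_pos_between_above_kink n xmin x xmax c); auto; lra.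
    + assert (xmin < k) by (apply Rlt_div_r; lra).
      assert (k < x) by (apply Rlt_div_l; lra).
      assert (0 < F n k c) by (apply (F_pos_mono n xmin k c); lra).
      apply (F_pos_between_above_kink n k x xmax c); auto; lra.
Qed.

Lemma F_antitone_odd n x c c' : Nat.Odd n -> 0 <= x -> c <= c' ->
  F n x c' <= F n x c.
Proof.
  intros Hn Hx Hc. unfold F.
  assert ((1 - x * c') ^ n <= (1 - x * c) ^ n) by (apply pow_odd_le; [exact Hn|nra]).
  lra.
Qed.

Lemma F_pos_on_odd_iff n xmin xmax cmax : Nat.Odd n -> 0 < xmin <= xmax -> 1 <= cmax ->
  F_pos_on n xmin xmax cmax <-> 0 < F n xmin cmax /\ 0 < F n xmax cmax.
Proof.
  intros Hn Hm Hc. split.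
  - intro H. split; apply H; lra.
  - intros [Hfmin Hfmax] x c Hx Hc'.
    apply Rlt_le_trans with (F n x cmax).
    + apply (F_pos_between_odd n xmin x xmax cmax); auto; lra.
    + apply F_antitone_odd; auto; lra.
Qed.

Lemma root2_pos N : 0 < root2 N.
Proof. unfold root2, Rpower. apply exp_pos. Qed.

Lemma root2_pow N : N <> 0%nat -> root2 N ^ N = 2.
Proof.
  intro HN. pose proof (root2_pos N). unfold root2 in *.
  rewrite <- Rpower_pow by assumption.
  rewrite Rpower_mult, Rinv_l by (apply not_0_INR; exact HN).
  apply Rpower_1; lra.
Qed.

Lemma two_lt_pow_iff N z : N <> 0%nat -> 0 <= z -> 2 < z ^ N <-> root2 N < z.
Proof.
  intros HN Hz. rewrite <- (root2_pow N HN) at 1. pose proof (root2_pos N).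
  split; intro Hlt.
  - destruct (Rlt_or_le (root2 N) z) as [|Hle]; [assumption|].
    pose proof (pow_incr z (root2 N) N (conj Hz Hle)). lra.
  - apply pow_lt_pow_l; [lra|exact HN].
Qed.

Lemma root2_lt_2 N : (2 <= N)%nat -> root2 N < 2.
Proof.
  intro HN. apply two_lt_pow_iff; [lia|lra|].
  pose proof (Rlt_pow 2 1 N ltac:(lra) ltac:(lia)). simpl in *. lra.
Qed.

Lemma F_at_kink n x c : n <> 0%nat -> x * c = 1 -> F n x c = (1 + x) ^ n - 2.
Proof.
  intros Hn Hxc. unfold F. rewrite Hxc.
  replace (1 - 1) with 0 by ring. rewrite pow_i by lia. ring.
Qed.

Lemma F_pos_of_root2_lt n x c : Nat.Even n -> n <> 0%nat -> root2 n < 1 + x ->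
  0 < F n x c.
Proof.
  intros He Hn Hx. pose proof (root2_pos n).
  assert (2 < (1 + x) ^ n) by (apply two_lt_pow_iff; [exact Hn|lra|exact Hx]).
  pose proof (pow_even_nonneg (1 - x * c) n He).
  unfold F. lra.
Qed.

Lemma F_pos_above_even n xmin x c cmax : Nat.Even n -> (2 <= n)%nat ->
  0 < xmin <= x -> 1 <= c <= cmax -> xmin * cmax <= 1 -> 0 < F n xmin cmax ->
  0 < F n x c.
Proof.
  intros He Hn [Hm Hx] Hc Hmc Hf.
  destruct (Rle_or_lt (x * cmax) 1) as [Hxc|Hxc].
  - assert (0 < F n x cmax) by (apply (F_pos_mono n xmin x cmax); lra).
    assert ((1 - x * cmax) ^ n <= (1 - x * c) ^ n) by (apply pow_incr; nra).
    unfold F in *. lra.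
  - set (k := 1 / cmax).
    assert (Hk : k * cmax = 1) by (unfold k; field; lra).
    assert (xmin <= k) by (apply Rle_div_r; lra).
    assert (k < x) by (apply Rlt_div_l; lra).
    assert (Hfk : 0 < F n k cmax) by (apply (F_pos_mono n xmin k cmax); lra).
    rewrite F_at_kink in Hfk by (lia || exact Hk).
    assert (root2 n < 1 + k) by (apply two_lt_pow_iff; [lia|lra|lra]).
    apply F_pos_of_root2_lt; [exact He|lia|lra].
Qed.

Lemma F_pos_on_even_iff n xmin xmax cmax : Nat.Even n -> (2 <= n)%nat ->
  0 < xmin <= xmax -> 1 <= cmax ->
  F_pos_on n xmin xmax cmax <->
  root2 n - 1 < xmin \/ (xmin * cmax <= 1 /\ 0 < F n xmin cmax).
Proof.
  intros He Hn Hm Hc. split.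
  - intro H. destruct (Rlt_or_le (root2 n - 1) xmin) as [|Hr]; [now left|right].
    split; [|apply H; lra].
    apply Rnot_lt_le. intro Hmc.
    pose proof (root2_lt_2 n Hn).
    assert (1 <= 1 / xmin <= cmax) by (split; [apply Rle_div_r|apply Rle_div_l]; lra).
    assert (Hf : 0 < F n xmin (1 / xmin)) by (apply H; lra).
    rewrite F_at_kink in Hf by (lia || (field; lra)).
    assert (root2 n < 1 + xmin) by (apply two_lt_pow_iff; [lia|lra|lra]).
    lra.
  - intros [Hr | [Hmc Hf]] x c Hx Hc'.
    + apply F_pos_of_root2_lt; [exact He|lia|lra].
    + apply (F_pos_above_even n xmin x c cmax); auto; lra.
Qed.

Lemma admissible_pos_iff N I0 mumin mumax epsmax K :
  (2 <= N)%nat -> 0 < I0 -> 0 < mumin -> 0 < K ->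
  (forall mu1 eps, admissible mumin mumax epsmax mu1 eps -> 0 < G N I0 K mu1 eps) <->
  F_pos_on N (K * mumin) (K * mumax) (1 + epsmax).
Proof.
  intros HN HI Hm HK. split.
  - intros H x c Hx Hc.
    assert (mumin <= x / K) by (apply Rle_div_r; lra).
    assert (x / K <= mumax) by (apply Rle_div_l; lra).
    assert (Had : admissible mumin mumax epsmax (x / K) (c - 1)).
    { unfold admissible. rewrite Rabs_right by lra. lra. }
    specialize (H _ _ Had). rewrite G_pos_iff in H by assumption.
    replace (K * (x / K)) with x in H by (field; lra).
    now replace (1 + (c - 1)) with c in H by ring.
  - intros H mu1 eps [Hmu Heps]. rewrite G_pos_iff by assumption.
    destruct (Rlt_or_le mu1 0) as [Hneg|Hnonneg].
    + apply F_pos_of_neg; [exact HN|nra|lra].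
    + rewrite Rabs_right in Hmu by lra.
      apply H; split; nra.
Qed.

Theorem mainTheorem1 (N : nat) (I0 mumin mumax epsmax K : R) :
  (2 <= N)%nat -> 0 < I0 -> 0 < mumin -> mumin <= mumax -> 0 <= epsmax ->
  0 < K ->
  (Nat.Odd N ->
    ((forall mu1 eps, admissible mumin mumax epsmax mu1 eps -> 0 < G N I0 K mu1 eps)
     <-> (0 < G N I0 K mumin epsmax /\ 0 < G N I0 K mumax epsmax))) /\
  (Nat.Even N ->
    ((forall mu1 eps, admissible mumin mumax epsmax mu1 eps -> 0 < G N I0 K mu1 eps)
     <-> (K > (root2 N - 1) / mumin \/
          (K <= 1 / (mumin * (1 + epsmax)) /\ 0 < G N I0 K mumin epsmax)))).
Proof.
  intros HN HI Hmin Hmm Heps HK.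
  rewrite (admissible_pos_iff N I0 mumin mumax epsmax K) by assumption.
  rewrite !G_pos_iff by assumption.
  assert (Hx : 0 < K * mumin <= K * mumax) by (split; nra).
  split; intro Hpar.
  - apply F_pos_on_odd_iff; [exact Hpar|exact Hx|lra].
  - rewrite F_pos_on_even_iff by (assumption || lra).
    unfold Rgt. rewrite Rlt_div_l, <- Rle_div_r, <- Rmult_assoc by nra.
    reflexivity.
Qed.
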